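(* There is a universal constant $C'>0$ such that the following holds. Let $(\Omega,Q,\pi)$ be a reversible Markov chain on a finite set and let $f$ be a positive function on $\Omega$ with $\mathbb E_\pi f=1$ and $f(\omega)\ge\delta$ for all $\omega\in\Omega$, where $\delta\in(0,1/2]$. Then $$\sum_{\omega\in\Omega}\pi(\omega)\,(f(\omega)-1)\log f(\omega)\le C'\,|\log\delta|\,{\rm Ent}_\pi(f).$$
   Context: ${\rm Ent}_\pi(f):=\mathbb E_\pi[f(\log f-\log\mathbb E_\pi f)]$. *)

From mathcomp Require Import all_boot all_order all_algebra.
From mathcomp Require Import all_classical all_reals.
From mathcomp Require Import exp.
Set Implicit Arguments. Unset Strict Implicit. Unset Printing Implicit Defensive.
Import Order.TTheory GRing.Theory Num.Theory.
Local Open Scope ring_scope.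

Definition reversible_chain (R : realType) (Omega : finType)
  (Q : Omega -> Omega -> R) (pi : Omega -> R) : Prop :=
  [/\ (forall x y, 0 <= Q x y),
      (forall x, \sum_(y : Omega) Q x y = 1),
      (forall x, 0 <= pi x),
      \sum_(x : Omega) pi x = 1
    & (forall x y, pi x * Q x y = pi y * Q y x)].

Definition Exp (R : realType) (Omega : finType) (pi : Omega -> R)
  (f : Omega -> R) : R := \sum_(w : Omega) pi w * f w.

Definition Ent (R : realType) (Omega : finType) (pi : Omega -> R)
  (f : Omega -> R) : R :=
  Exp pi (fun w => f w * (ln (f w) - ln (Exp pi f))).

(* With [E_pi f = 1] the entropy is [E_pi (f ln f - f + 1)], so the theorem
   follows from a pointwise comparison of [(x - 1) ln x] with
   [phi x = x ln x - x + 1] for [x >= delta].  Writing [s = sqrt x], one has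
   [phi x >= (1 - s)^2].  For [x >= 1/2] the ratio of the two sides is bounded
   by a constant, and [1/2 <= |ln delta|]; for [delta <= x < 1/2] the left side
   is at most [-ln x <= |ln delta|] while [phi x >= (1 - sqrt(1/2))^2 > 4/49]. *)

From mathcomp Require Import all_boot all_order all_algebra.
From mathcomp Require Import all_classical all_reals.
From mathcomp Require Import exp.
From mathcomp Require Import ring lra.
Import Order.TTheory GRing.Theory Num.Theory.
Local Open Scope ring_scope.

Section EntropyIntegrand.
Variable R : realType.
Implicit Types x d : R.

Definition ent_integrand x := x * ln x - x + 1.

Lemma ln_le_subr1 x : 0 < x -> ln x <= x - 1.
Proof.
move=> x0; have := @le_ln1Dx R (x - 1).
by rewrite addrCA subrr addr0; apply; lra.
Qed.

Lemma subr1_le_mul_ln x : 0 < x -> x - 1 <= x * ln x.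
Proof.
move=> x0; have := ln_le_subr1 x^-1; rewrite invr_gt0 lnV ?posrE // => /(_ x0) lnVx.
have : x * (1 - x^-1) <= x * ln x by rewrite ler_pM2l //; lra.
by rewrite mulrBr mulr1 mulfV ?gt_eqF.
Qed.

Lemma half_le_norm_ln d : 0 < d -> d <= 1 / 2 -> 1 / 2 <= `|ln d|.
Proof.
move=> d0 dhalf.
have ln_le_half : ln d <= ln (1 / 2 : R) by rewrite ler_ln ?posrE //; lra.
have ln2_ge : 1 <= 2 * ln (2 : R) by have := subr1_le_mul_ln 2 (ltr0Sn _ 1); lra.
rewrite mul1r lnV ?posrE // in ln_le_half.
by rewrite ler0_norm; lra.
Qed.

Lemma ln_sqrtr x : 0 < x -> ln x = 2 * ln (Num.sqrt x).
Proof.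
move=> x0; rewrite -[in LHS](@sqr_sqrtr _ x) ?ltW //.
by rewrite lnXn ?sqrtr_gt0 // mulr_natl.
Qed.

Lemma sqr_subr_sqrt_le_ent_integrand x :
  0 < x -> (1 - Num.sqrt x) ^+ 2 <= ent_integrand x.
Proof.
move=> x0; set s := Num.sqrt x; have s0 : 0 < s by rewrite sqrtr_gt0.
have xE : x = s ^+ 2 by rewrite sqr_sqrtr // ltW.
rewrite /ent_integrand ln_sqrtr // -/s xE.
have := subr1_le_mul_ln s s0; nra.
Qed.

Lemma ent_integrand_ge0 x : 0 < x -> 0 <= ent_integrand x.
Proof.
by move=> x0; apply: le_trans (sqr_subr_sqrt_le_ent_integrand x x0); apply: sqr_ge0.
Qed.

(* In terms of [s = sqrt x], [s (4 phi x - (x - 1) ln x)] equals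
   [(6 s^2 + 2) (s ln s - (s - 1)) + 2 (s - 1)^3]. *)
Lemma mul_ln_le_ent_integrand_ge1 x :
  1 <= x -> (x - 1) * ln x <= 4 * ent_integrand x.
Proof.
move=> x1; have x0 : 0 < x by lra.
set s := Num.sqrt x; have s0 : 0 < s by rewrite sqrtr_gt0.
have s1 : 1 <= s by rewrite /s -sqrtr1 ler_sqrt //; lra.
have xE : x = s ^+ 2 by rewrite sqr_sqrtr // ltW.
rewrite /ent_integrand ln_sqrtr // -/s xE -subr_ge0.
set D := (X in 0 <= X).
have sDE : s * D = (6 * s ^+ 2 + 2) * (s * ln s - (s - 1)) + 2 * (s - 1) ^+ 3.
  by rewrite /D; ring.
suff : 0 <= s * D by rewrite pmulr_rge0.
rewrite sDE; apply: addr_ge0; apply: mulr_ge0.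
- by have := sqr_ge0 s; lra.
- by have := subr1_le_mul_ln s s0; lra.
- by [].
- by apply: exprn_ge0; lra.
Qed.

Lemma mul_ln_le_ent_integrand_mid x :
  1 / 2 <= x <= 1 -> (x - 1) * ln x <= 8 * ent_integrand x.
Proof.
case/andP=> xhalf x1; have x0 : 0 < x by lra.
set s := Num.sqrt x; have s0 : 0 < s by rewrite sqrtr_gt0.
have s1 : s <= 1 by rewrite /s -sqrtr1 ler_sqrt //; lra.
have xE : x = s ^+ 2 by rewrite sqr_sqrtr // ltW.
have ln_le : - ln x <= 2 * (1 - x).
  have := subr1_le_mul_ln x x0; have := ln_le0 x1; nra.
have sqr_le : (1 - x) ^+ 2 <= 4 * (1 - s) ^+ 2.
  by rewrite xE; have := sqr_ge0 (1 - s); nra.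
have := sqr_subr_sqrt_le_ent_integrand x x0; rewrite -/s.
have := ln_le0 x1; nra.
Qed.

Lemma mul_ln_le_ent_integrand_small x d :
  0 < d -> d <= x -> x < 1 / 2 ->
  (x - 1) * ln x <= 16 * `|ln d| * ent_integrand x.
Proof.
move=> d0 dx xhalf; have x0 : 0 < x by lra.
set s := Num.sqrt x; have s0 : 0 < s by rewrite sqrtr_gt0.
have xE : x = s ^+ 2 by rewrite sqr_sqrtr // ltW.
have s_le : s <= 5 / 7 by rewrite -(@ler_pXn2r _ 2) ?nnegrE ?(ltW s0) //; nra.
have ent_ge : 4 / 49 <= ent_integrand x.
  apply: le_trans (sqr_subr_sqrt_le_ent_integrand x x0) => /=.
  have : 0 <= (5 / 7 - s) * (9 / 7 - s) by apply: mulr_ge0; lra.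
  rewrite -/s; nra.
have lnx_le0 : ln x <= 0 by apply: ln_le0; lra.
have lnx_ge : - `|ln d| <= ln x.
  by rewrite ler0_norm ?opprK ?ler_ln ?posrE //; apply: ln_le0; lra.
have := normr_ge0 (ln d); nra.
Qed.

Lemma mul_ln_le_ent_integrand x d : 0 < d -> d <= 1 / 2 -> d <= x ->
  (x - 1) * ln x <= 16 * `|ln d| * ent_integrand x.
Proof.
move=> d0 dhalf dx; have x0 : 0 < x by lra.
have [xsmall|xhalf] := ltP x (1 / 2).
  exact: mul_ln_le_ent_integrand_small.
have eight_le : 8 <= 16 * `|ln d| by have := half_le_norm_ln d d0 dhalf; lra.
have ent0 := ent_integrand_ge0 x x0.
have [x1|x1] := leP 1 x.
  by have := mul_ln_le_ent_integrand_ge1 x x1; nra.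
by have := @mul_ln_le_ent_integrand_mid x; rewrite xhalf ltW //=; nra.
Qed.

Lemma Ent_normalized (Omega : finType) (pi f : Omega -> R) :
  \sum_w pi w = 1 -> Exp pi f = 1 ->
  Ent pi f = \sum_w pi w * ent_integrand (f w).
Proof.
move=> pi1 Ef; rewrite /Ent Ef ln1 /ent_integrand.
under [RHS]eq_bigr => w _ do rewrite mulrDr mulrBr mulr1.
rewrite big_split big_split /= sumrN -/(Exp pi f) Ef pi1 subrK.
by apply: eq_bigr => w _; rewrite subr0.
Qed.

End EntropyIntegrand.

Theorem mainTheorem13 (R : realType) :
  exists C' : R, 0 < C' /\
  forall (Omega : finType) (Q : Omega -> Omega -> R) (pi : Omega -> R)
         (f : Omega -> R) (delta : R),
    reversible_chain Q pi ->
    (forall w, 0 < f w) ->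
    Exp pi f = 1 ->
    0 < delta -> delta <= 1 / 2 ->
    (forall w, delta <= f w) ->
    \sum_(w : Omega) pi w * ((f w - 1) * ln (f w))
      <= C' * `|ln delta| * Ent pi f.
Proof.
exists 16; split; first lra.
move=> Omega Q pi f d [_ _ pi0 pi1 _] _ Ef d0 dhalf fd.
rewrite Ent_normalized // mulr_sumr; apply: ler_sum => w _.
rewrite [leRHS]mulrCA; apply: ler_wpM2l => //.
exact: mul_ln_le_ent_integrand.
Qed.
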